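(* In the setting described in the context, suppose that $(\mathrm{Id}_V\otimes Y)(Y\otimes \mathrm{Id}_V)w-qw\in\Upsilon^{(3)}$ for all $w\in V\otimes I_2$. Then for all $x,y\in V$ the following identity holds in $\bigwedge^2V^*$: $$\ell_{xy}\wedge\ell'_{xy}=\ell_{xx}\wedge\ell'_{yy}.$$
   Context: Let $V$ be a $3$-dimensional vector space over a field $k$ and $\zeta\in GL(V)$. Write $xy$ for $x\otimes y$ in the tensor algebra $T(V)$. Put $x\barwedge y=\zeta(x)y-\zeta(y)x\in V^{\otimes 2}$ and $x\barwedge y\barwedge z=\zeta^2(x)\zeta(y)z+\zeta^2(y)\zeta(z)x+\zeta^2(z)\zeta(x)y-\zeta^2(x)\zeta(z)y-\zeta^2(y)\zeta(x)z-\zeta^2(z)\zeta(y)x\in V^{\otimes3}$. Let $I$ be the two-sided ideal of $T(V)$ generated by all $x\barwedge y$, $A=T(V)/I$, $I_2=I\cap V^{\otimes 2}$ (spanned by the $x\barwedge y$), and $\Upsilon^{(3)}=(I_2\otimes V)\cap(V\otimes I_2)$, the one-dimensional space spanned by the $x\barwedge y\barwedge z$. The maps $x\wedge y\mapsto x\barwedge y$ and $x\wedge y\wedge z\mapsto x\barwedge y\barwedge z$ are linear isomorphisms $\bigwedge^2V\cong I_2$, $\bigwedge^3V\cong\Upsilon^{(3)}$; transporting the exterior product, for $x\in V$ and $w\in I_2$ one gets $x\barwedge w\in\Upsilon^{(3)}$, bilinear, with $x\barwedge(y\barwedge z)=x\barwedge y\barwedge z$. Let $R$ be a Hecke symmetry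 on $V$ with parameter $q\ne0$ (i.e. $R$ satisfies the braid equation $(R\otimes\mathrm{Id})(\mathrm{Id}\otimes R)(R\otimes\mathrm{Id})=(\mathrm{Id}\otimes R)(R\otimes\mathrm{Id})(\mathrm{Id}\otimes R)$ and $(R-q\,\mathrm{Id})(R+\mathrm{Id})=0$) such that $\mathbb{S}(V,R)=A$, i.e. $\mathrm{Im}(R-q\,\mathrm{Id}_{V\otimes V})=I_2$. Put $R'=(\zeta^{-1}\otimes\zeta^{-1})R(\zeta\otimes\zeta)$, $Y=q\,\mathrm{Id}-R$, $Y'=q\,\mathrm{Id}-R'$. Fix a nonzero alternating trilinear form $\omega$ on $V$ and let $\tilde\omega:\Upsilon^{(3)}\to k$ be the linear map with $\tilde\omega(x\barwedge y\barwedge z)=\omega(x,y,z)$. Define linear forms $\ell_{xy},\ell'_{xy}\in V^*$ for $x,y\in V$ by $\ell_{xy}(z)=\tilde\omega\big(x\barwedge Y(\zeta(y)z)\big)$ and $\ell'_{xy}(z)=\tilde\omega\big(x\barwedge Y'(\zeta(y)z)\big)$. *)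

(* V = 'rV[k]_3 (row vectors, a basis of V being fixed),
   V^{(x)2} = 'rV[k]_9, V^{(x)3} = 'rV[k]_27, with x (x) y := x *t y
   (Kronecker product, row-major indexing, from mathcomp.real_closed.mxtens).
   Linear maps act on the RIGHT of row vectors: f(w) = w *m F, hence the
   matrix of a composite f o g is G *m F. *)
From mathcomp Require Import all_boot all_order all_algebra.
From mathcomp Require Import mxtens.
Set Implicit Arguments.
Unset Strict Implicit.
Unset Printing Implicit Defensive.
Import GRing.Theory.
Local Open Scope ring_scope.

Section Defs.
Variable k : fieldType.

Definition t2 (x y : 'rV[k]_3) : 'rV[k]_9 := x *t y.
Definition t3 (x y z : 'rV[k]_3) : 'rV[k]_27 := (x *t y) *t z.
Definition tVI (x : 'rV[k]_3) (a : 'rV[k]_9) : 'rV[k]_27 := x *t a.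
Definition tIV (a : 'rV[k]_9) (z : 'rV[k]_3) : 'rV[k]_27 := a *t z.

Definition mxI (F : 'M[k]_9) : 'M[k]_27 := F *t (1%:M : 'M[k]_3).
Definition Imx (F : 'M[k]_9) : 'M[k]_27 := (1%:M : 'M[k]_3) *t F.

(* zeta acts by x |-> x *m Z *)
Definition bw2 (Z : 'M[k]_3) (x y : 'rV[k]_3) : 'rV[k]_9 :=
  t2 (x *m Z) y - t2 (y *m Z) x.

Definition bw3 (Z : 'M[k]_3) (x y z : 'rV[k]_3) : 'rV[k]_27 :=
  t3 (x *m Z *m Z) (y *m Z) z + t3 (y *m Z *m Z) (z *m Z) x
  + t3 (z *m Z *m Z) (x *m Z) y - t3 (x *m Z *m Z) (z *m Z) y
  - t3 (y *m Z *m Z) (x *m Z) z - t3 (z *m Z *m Z) (y *m Z) x.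

Definition inspan n (P : 'rV[k]_n -> Prop) (w : 'rV[k]_n) : Prop :=
  forall U : 'M[k]_n, (forall v, P v -> (v <= U)%MS) -> (w <= U)%MS.

Definition inI2 (Z : 'M[k]_3) : 'rV[k]_9 -> Prop :=
  inspan (fun v => exists x y, v = bw2 Z x y).
Definition inI2V (Z : 'M[k]_3) : 'rV[k]_27 -> Prop :=
  inspan (fun u => exists a z, inI2 Z a /\ u = tIV a z).
Definition inVI2 (Z : 'M[k]_3) : 'rV[k]_27 -> Prop :=
  inspan (fun u => exists x a, inI2 Z a /\ u = tVI x a).
Definition inUps3 (Z : 'M[k]_3) (u : 'rV[k]_27) : Prop :=
  inI2V Z u /\ inVI2 Z u.

Definition e (i : nat) : 'rV[k]_3 := delta_mx 0 (inord i).

(* the images of the basis e0^e1, e0^e2, e1^e2 of /\^2 V in I_2 *)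
Definition B2 (Z : 'M[k]_3) : 'M[k]_(3, 9) :=
  col_mx (bw2 Z (e 0) (e 1)) (col_mx (bw2 Z (e 0) (e 2)) (bw2 Z (e 1) (e 2))).

(* coordinates of the preimage in /\^2 V (basis e0^e1, e0^e2, e1^e2) of w in I_2 *)
Definition wcoord (Z : 'M[k]_3) (w : 'rV[k]_9) : 'rV[k]_3 := w *m pinvmx (B2 Z).

(* x barwedge w for x in V, w in I_2 (transport of the exterior product) *)
Definition bwVI (Z : 'M[k]_3) (x : 'rV[k]_3) (w : 'rV[k]_9) : 'rV[k]_27 :=
  let c := wcoord Z w in
  c 0 (inord 0) *: bw3 Z x (e 0) (e 1) + c 0 (inord 1) *: bw3 Z x (e 0) (e 2)
  + c 0 (inord 2) *: bw3 Z x (e 1) (e 2).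

(* omega-tilde : Upsilon^(3) -> k, omt(t * e0 bw e1 bw e2) = t * omega(e0,e1,e2) *)
Definition omt (Z : 'M[k]_3) (om : 'rV[k]_3 -> 'rV[k]_3 -> 'rV[k]_3 -> k)
  (u : 'rV[k]_27) : k :=
  (u *m pinvmx (bw3 Z (e 0) (e 1) (e 2))) 0 0 * om (e 0) (e 1) (e 2).

(* ell_{xy}(z) = omt (x bw Y(zeta(y) z)) ; Y given as a matrix acting on the right *)
Definition ell (Z : 'M[k]_3) om (Y : 'M[k]_9) (x y : 'rV[k]_3) : 'rV[k]_3 -> k :=
  fun z => omt Z om (bwVI Z x (t2 (y *m Z) z *m Y)).

(* exterior product of two linear forms, as an alternating bilinear form *)
Definition wedge1 (a b : 'rV[k]_3 -> k) (u v : 'rV[k]_3) : k :=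
  a u * b v - a v * b u.

Definition trilinear (om : 'rV[k]_3 -> 'rV[k]_3 -> 'rV[k]_3 -> k) : Prop :=
  (forall c x x' y z, om (c *: x + x') y z = c * om x y z + om x' y z) /\
  (forall c x y y' z, om x (c *: y + y') z = c * om x y z + om x y' z) /\
  (forall c x y z z', om x y (c *: z + z') = c * om x y z + om x y z').

Definition alternating (om : 'rV[k]_3 -> 'rV[k]_3 -> 'rV[k]_3 -> k) : Prop :=
  (forall x z, om x x z = 0) /\ (forall x y, om x y y = 0) /\
  (forall x y, om x y x = 0).

End Defs.

From mathcomp Require Import all_boot all_order all_algebra.
From mathcomp Require Import mxtens ring.
Import GRing.Theory.
Local Open Scope ring_scope.

(* Untwisting by zeta^-1 (x) 1 on V (x) V and by zeta^-2 (x) zeta^-1 (x) 1 on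
   V (x) V (x) V turns x bw y into the ordinary antisymmetric tensor
   x (x) y - y (x) x; hence I_2 becomes the alternating 2-tensors and Upsilon^(3)
   consists of tensors alternating in both pairs of adjacent positions.  In these
   coordinates ell_xy(z) = omega(e0,e1,e2) * vol x ((y (x) z) A) for a conjugate A
   of Y, where vol x is a linear form with vol x (a (x) b - b (x) a) = det(x,a,b).
   The linear form psi_{x,y}(u) = sum_i det(x,y,e_i) vol x (u_i), with u_i the
   slices of u along the first factor, vanishes on doubly alternating tensors,
   where it is a multiple of det(x,y,x) = 0.  Evaluated on the untwisted
   hypothesis element for w = zeta^2(y) (x) (v bw u), and expanded with the
   vector triple product formula for alternating 2-tensors, psi gives exactly
   the difference of the two sides of the identity. *)

Section TensorProduct.
Variable R : pzRingType.

Lemma addmx_entry m n (A B : 'M[R]_(m, n)) i j : (A + B) i j = A i j + B i j.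
Proof. by rewrite mxE. Qed.

Lemma submx_entry m n (A B : 'M[R]_(m, n)) i j : (A - B) i j = A i j - B i j.
Proof. by rewrite !mxE. Qed.

Lemma scalemx_entry m n c (A : 'M[R]_(m, n)) i j : (c *: A) i j = c * A i j.
Proof. by rewrite mxE. Qed.

Lemma tensmxDl m n p r (A B : 'M[R]_(m, n)) (C : 'M[R]_(p, r)) :
  (A + B) *t C = A *t C + B *t C.
Proof. by apply/matrixP => i j; rewrite !mxE mulrDl. Qed.

Lemma tensmxBl m n p r (A B : 'M[R]_(m, n)) (C : 'M[R]_(p, r)) :
  (A - B) *t C = A *t C - B *t C.
Proof. by apply/matrixP => i j; rewrite !mxE mulrBl. Qed.

Lemma tensmxBr m n p r (A : 'M[R]_(m, n)) (B C : 'M[R]_(p, r)) :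
  A *t (B - C) = A *t B - A *t C.
Proof. by apply/matrixP => i j; rewrite !mxE mulrBr. Qed.

Lemma tensmxZl m n p r (c : R) (A : 'M[R]_(m, n)) (C : 'M[R]_(p, r)) :
  (c *: A) *t C = c *: (A *t C).
Proof. by apply/matrixP => i j; rewrite !mxE mulrA. Qed.

Lemma tensmx11 m n : (1%:M : 'M[R]_m) *t (1%:M : 'M[R]_n) = 1%:M.
Proof.
apply/matrixP => i j.
case: (mxtens_indexP i) => a b; case: (mxtens_indexP j) => c d.
rewrite tensmxE !mxE (inj_eq (can_inj (@mxtens_indexK m n))) xpair_eqE.
by case: (a == c); case: (b == d); rewrite ?mulr1 ?mulr0 ?mul0r.
Qed.

End TensorProduct.

Section Span.
Variable k : fieldType.
Set Implicit Arguments.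
Unset Strict Implicit.

Lemma inspan_gen n (P : 'rV[k]_n -> Prop) v : P v -> inspan P v.
Proof. by move=> Pv U; apply. Qed.

Lemma inspan_mulmx_eq0 n m (P : 'rV[k]_n -> Prop) (M : 'M[k]_(n, m)) w :
  inspan P w -> (forall v, P v -> v *m M = 0) -> w *m M = 0.
Proof. by move=> Pw PM; apply/sub_kermxP/Pw => v /PM /sub_kermxP. Qed.

Lemma inspan_col_eq0 n m (P : 'rV[k]_n -> Prop) (M : 'M[k]_(n, m)) (f : 'cV[k]_m) w :
  inspan P w -> (forall v, P v -> (v *m M *m f) 0 0 = 0) -> (w *m M *m f) 0 0 = 0.
Proof.
move=> Pw PM; rewrite -mulmxA (inspan_mulmx_eq0 Pw) ?mxE // => v Pv.
by rewrite [_ *m _]mx11_scalar mulmxA (PM v Pv) raddf0.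
Qed.

Lemma mul_rV_delta_col n (v : 'rV[k]_n) p : (v *m delta_mx p (0 : 'I_1)) 0 0 = v 0 p.
Proof.
rewrite mxE (bigD1 p) //= mxE !eqxx mulr1 big1 ?addr0 // => i /negbTE ne_ip.
by rewrite mxE ne_ip mulr0.
Qed.

Lemma mulmx_pinv_rV n (v : 'rV[k]_n) : v != 0 -> v *m pinvmx v = 1%:M.
Proof.
move=> v_neq0; have := mulmxKpV (submx_refl v).
rewrite [v *m _]mx11_scalar mul_scalar_mx => /eqP.
rewrite -subr_eq0 -[X in _ - X]scale1r -scalerBl scalemx_eq0 (negbTE v_neq0) orbF.
by rewrite subr_eq0 => /eqP ->.
Qed.

End Span.

Section ThreeSpace.
Variable k : fieldType.
Set Implicit Arguments.
Unset Strict Implicit.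
Implicit Types (a b c t x y z : 'rV[k]_3) (s : 'rV[k]_9) (u : 'rV[k]_27).

Definition i0 : 'I_3 := @Ordinal 3 0 isT.
Definition i1 : 'I_3 := @Ordinal 3 1 isT.
Definition i2 : 'I_3 := @Ordinal 3 2 isT.

Lemma ord3P (i : 'I_3) : [\/ i = i0, i = i1 | i = i2].
Proof.
by case: i => [[|[|[|n]]] lt_i3] //; [apply: Or31 | apply: Or32 | apply: Or33];
  apply: val_inj.
Qed.

Lemma inord3 :
  ((inord 0 : 'I_3) = i0) * ((inord 1 : 'I_3) = i1) * ((inord 2 : 'I_3) = i2).
Proof.
by do !split; [exact: (inord_val i0) | exact: (inord_val i1) | exact: (inord_val i2)].
Qed.

Lemma sum3 (V : nmodType) (F : 'I_3 -> V) : \sum_(i < 3) F i = F i0 + F i1 + F i2.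
Proof.
by rewrite !big_ord_recl big_ord0 addr0 addrA; congr (F _ + F _ + F _); apply: val_inj.
Qed.

Definition e3 (i : 'I_3) : 'rV[k]_3 := delta_mx 0 i.

Lemma e3E i j : e3 i 0 j = (i == j)%:R.
Proof. by rewrite /e3 mxE eqxx eq_sym. Qed.

Lemma eE : (e k 0 = e3 i0) * (e k 1 = e3 i1) * (e k 2 = e3 i2).
Proof. by rewrite /e !inord3. Qed.

Definition idx2 (i j : 'I_3) : 'I_9 := mxtens_index (i, j).
Definition idx3 (i j l : 'I_3) : 'I_27 := mxtens_index (i, idx2 j l).

Lemma idx3_assoc (i j l : 'I_3) : mxtens_index (idx2 i j, l) = idx3 i j l :> 'I_27.
Proof. by apply: val_inj; rewrite /= !mulnDl -!mulnA !addnA. Qed.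

Lemma rV9P s s' : (forall i j, s 0 (idx2 i j) = s' 0 (idx2 i j)) -> s = s'.
Proof.
by move=> E; apply/rowP => p; case: (@mxtens_indexP 3 3 p) => i j; apply: E.
Qed.

Lemma rV27P u u' : (forall i j l, u 0 (idx3 i j l) = u' 0 (idx3 i j l)) -> u = u'.
Proof.
move=> E; apply/rowP => p; case: (@mxtens_indexP (3 * 3) 3 p) => ij l.
by case: (@mxtens_indexP 3 3 ij) => i j; rewrite idx3_assoc.
Qed.

Lemma tens33E a b i j : (a *t b) 0 (idx2 i j) = a 0 i * b 0 j.
Proof. by rewrite /idx2 !mxE mxtens_indexK !ord1. Qed.

Lemma tens39E a s i j l : (a *t s : 'rV_27) 0 (idx3 i j l) = a 0 i * s 0 (idx2 j l).
Proof. by rewrite /idx3 mxE mxtens_indexK !ord1. Qed.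

Lemma tens93E s c i j l : (s *t c : 'rV_27) 0 (idx3 i j l) = s 0 (idx2 i j) * c 0 l.
Proof. by rewrite -idx3_assoc mxE mxtens_indexK !ord1. Qed.

Lemma tens3_assoc a b c : ((a *t b) *t c : 'rV_27) = a *t (b *t c).
Proof. by apply: rV27P => i j l; rewrite tens93E tens39E !tens33E mulrA. Qed.

Lemma tensmx3_assoc (A B C : 'M[k]_3) : ((A *t B) *t C : 'M_27) = A *t (B *t C).
Proof.
apply/matrixP => p p'.
case: (@mxtens_indexP (3 * 3) 3 p) => ij l; case: (@mxtens_indexP 3 3 ij) => i j.
case: (@mxtens_indexP (3 * 3) 3 p') => ij' l'; case: (@mxtens_indexP 3 3 ij') => i' j'.
by rewrite [in RHS]idx3_assoc [in RHS]idx3_assoc /idx3 /idx2 !mxE !mxtens_indexK /= mulrA.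
Qed.

(* Instances of [tensmx_mul] at sizes 3, 9 and 27: the general lemma does not
   rewrite here, since [3 * 3] and [9] are only convertible. *)
Lemma tensmx_mul33 a b (A B : 'M[k]_3) :
  (a *t b : 'rV_9) *m (A *t B) = (a *m A) *t (b *m B).
Proof. exact: (@tensmx_mul k 1 3 1 3 3 3 a b A B). Qed.

Lemma tensmx_mul39 a s (A : 'M[k]_3) (B : 'M[k]_9) :
  (a *t s : 'rV_27) *m (A *t B) = (a *m A) *t (s *m B).
Proof. exact: (@tensmx_mul k 1 3 1 9 3 9 a s A B). Qed.

Lemma tensmx_mul93 s c (A : 'M[k]_9) (B : 'M[k]_3) :
  (s *t c : 'rV_27) *m (A *t B) = (s *m A) *t (c *m B).
Proof. exact: (@tensmx_mul k 1 9 1 3 9 3 s c A B). Qed.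

Lemma tensmx_mulmx33 (A B C D : 'M[k]_3) :
  (A *t B : 'M_9) *m (C *t D) = (A *m C) *t (B *m D).
Proof. exact: (@tensmx_mul k 3 3 3 3 3 3 A B C D). Qed.

Lemma tensmx_mulmx39 (A C : 'M[k]_3) (B D : 'M[k]_9) :
  (A *t B : 'M_27) *m (C *t D) = (A *m C) *t (B *m D).
Proof. exact: (@tensmx_mul k 3 3 9 9 3 9 A B C D). Qed.

Lemma tensmx_mulmx93 (A C : 'M[k]_9) (B D : 'M[k]_3) :
  (A *t B : 'M_27) *m (C *t D) = (A *m C) *t (B *m D).
Proof. exact: (@tensmx_mul k 9 9 3 3 9 3 A B C D). Qed.

Definition det3 a b c : k :=
  a 0 i0 * (b 0 i1 * c 0 i2 - b 0 i2 * c 0 i1)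
  + a 0 i1 * (b 0 i2 * c 0 i0 - b 0 i0 * c 0 i2)
  + a 0 i2 * (b 0 i0 * c 0 i1 - b 0 i1 * c 0 i0).

Lemma det3_xyy x y : det3 x y y = 0.
Proof. by rewrite /det3; ring. Qed.

Definition skew2 a b : 'rV[k]_9 := a *t b - b *t a.

Definition alt3 a b c : 'rV[k]_27 :=
  t3 a b c + t3 b c a + t3 c a b - t3 a c b - t3 b a c - t3 c b a.

Lemma skew2_basis a b : skew2 a b =
  (a 0 i0 * b 0 i1 - a 0 i1 * b 0 i0) *: skew2 (e3 i0) (e3 i1)
  + (a 0 i0 * b 0 i2 - a 0 i2 * b 0 i0) *: skew2 (e3 i0) (e3 i2)
  + (a 0 i1 * b 0 i2 - a 0 i2 * b 0 i1) *: skew2 (e3 i1) (e3 i2).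
Proof.
apply: rV9P => i j.
rewrite !(submx_entry, addmx_entry, scalemx_entry) !tens33E !mxE.
by case: (ord3P i) => ->; case: (ord3P j) => -> /=; ring.
Qed.

Lemma alt3E a b c i j l : alt3 a b c 0 (idx3 i j l) =
  a 0 i * b 0 j * c 0 l + b 0 i * c 0 j * a 0 l + c 0 i * a 0 j * b 0 l
  - a 0 i * c 0 j * b 0 l - b 0 i * a 0 j * c 0 l - c 0 i * b 0 j * a 0 l.
Proof. by rewrite !(submx_entry, addmx_entry) /t3 !tens93E !tens33E. Qed.

Lemma alt3_det a b c : alt3 a b c = det3 a b c *: alt3 (e3 i0) (e3 i1) (e3 i2).
Proof.
apply: rV27P => i j l; rewrite scalemx_entry !alt3E !mxE /det3.
by case: (ord3P i) => ->; case: (ord3P j) => ->; case: (ord3P l) => -> /=; ring.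
Qed.

Lemma alt3_neq0 : alt3 (e3 i0) (e3 i1) (e3 i2) != 0.
Proof.
apply/eqP => /(congr1 (fun u => u 0 (idx3 i0 i1 i2))).
by rewrite alt3E !mxE /= => /eqP; rewrite (_ : _ - _ = 1) ?oner_eq0 //; ring.
Qed.

Definition alt_in m (s : 'rV[k]_m) (ix : 'I_3 -> 'I_3 -> 'I_m) : Prop :=
  (forall i j, s 0 (ix j i) = - s 0 (ix i j)) /\ (forall i, s 0 (ix i i) = 0).

Definition alt2 s := alt_in s idx2.
Definition alt12 u := forall l, alt_in u (fun i j => idx3 i j l).
Definition alt23 u := forall i, alt_in u (idx3 i).

Lemma alt2_skew2 a b : alt2 (skew2 a b).
Proof. by split=> [i j|i]; rewrite !submx_entry !tens33E; ring. Qed.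

Lemma inspan_alt_in n m (P : 'rV[k]_n -> Prop) (M : 'M[k]_(n, m)) ix w :
  inspan P w -> (forall v, P v -> alt_in (v *m M) ix) -> alt_in (w *m M) ix.
Proof.
move=> Pw PM; have entry2 (v : 'rV[k]_n) (p p' : 'I_m) :
    (v *m M *m (delta_mx p (0 : 'I_1) + delta_mx p' 0)) 0 0 = (v *m M) 0 p + (v *m M) 0 p'.
  by rewrite mulmxDr addmx_entry !mul_rV_delta_col.
split=> [i j|i].
- apply/eqP; rewrite -addr_eq0 -entry2; apply/eqP/(inspan_col_eq0 Pw) => v /PM[skw _].
  by rewrite entry2 skw addNr.
- rewrite -mul_rV_delta_col; apply: (inspan_col_eq0 Pw) => v /PM[_ diag].
  by rewrite mul_rV_delta_col diag.
Qed.

Definition vol x s : k :=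
  x 0 i0 * s 0 (idx2 i1 i2) + x 0 i1 * s 0 (idx2 i2 i0) + x 0 i2 * s 0 (idx2 i0 i1).

Lemma volD x s s' : vol x (s + s') = vol x s + vol x s'.
Proof. by rewrite /vol !addmx_entry; ring. Qed.

Lemma volB x s s' : vol x (s - s') = vol x s - vol x s'.
Proof. by rewrite /vol !submx_entry; ring. Qed.

Lemma volZ x r s : vol x (r *: s) = r * vol x s.
Proof. by rewrite /vol !scalemx_entry; ring. Qed.

Lemma vol_skew2 x a b : vol x (skew2 a b) = det3 x a b.
Proof. by rewrite /vol !submx_entry !tens33E /det3; ring. Qed.

Definition slice (i : 'I_3) u : 'rV[k]_9 := \row_(p < 9) u 0 (@mxtens_index 3 9 (i, p)).

Lemma sliceE i u j l : slice i u 0 (idx2 j l) = u 0 (idx3 i j l).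
Proof. by rewrite mxE. Qed.

Lemma sliceD i u u' : slice i (u + u') = slice i u + slice i u'.
Proof. by apply/rowP => p; rewrite !mxE. Qed.

Lemma sliceB i u u' : slice i (u - u') = slice i u - slice i u'.
Proof. by apply/rowP => p; rewrite !mxE. Qed.

Lemma sliceZ i r u : slice i (r *: u) = r *: slice i u.
Proof. by apply/rowP => p; rewrite !mxE. Qed.

Lemma slice_tens i t s : slice i (t *t s) = t 0 i *: s.
Proof. by apply/rowP => p; rewrite !mxE mxtens_indexK !ord1. Qed.

Definition psi x y u : k :=
  det3 x y (e3 i0) * vol x (slice i0 u) + det3 x y (e3 i1) * vol x (slice i1 u)
  + det3 x y (e3 i2) * vol x (slice i2 u).

Lemma psiD x y u u' : psi x y (u + u') = psi x y u + psi x y u'.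
Proof. by rewrite /psi !sliceD !volD; ring. Qed.

Lemma psiB x y u u' : psi x y (u - u') = psi x y u - psi x y u'.
Proof. by rewrite /psi !sliceB !volB; ring. Qed.

Lemma psiZ x y r u : psi x y (r *: u) = r * psi x y u.
Proof. by rewrite /psi !sliceZ !volZ; ring. Qed.

Lemma psi_tens x y t s : psi x y (t *t s) = det3 x y t * vol x s.
Proof. by rewrite /psi !slice_tens !volZ /det3 !mxE /=; ring. Qed.

Lemma psi_alt x y u : alt12 u -> alt23 u -> psi x y u = 0.
Proof.
move=> alt_12 alt_23.
have d12 i l : u 0 (idx3 i i l) = 0 := (alt_12 l).2 i.
have s12 i j l : u 0 (idx3 j i l) = - u 0 (idx3 i j l) := (alt_12 l).1 i j.
have s23 i j l : u 0 (idx3 i l j) = - u 0 (idx3 i j l) := (alt_23 i).1 j l.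
rewrite /psi /vol !sliceE (s23 i0 i0 i2) (s23 i1 i1 i0) (s23 i2 i2 i1) !d12.
rewrite (s23 i1 i0 i2) (s12 i0 i1 i2) (s12 i0 i2 i1) (s23 i0 i1 i2) !opprK.
by rewrite /det3 !mxE /=; ring.
Qed.

Definition prow i s : 'rV[k]_3 := \row_j s 0 (idx2 i j).

Lemma rV9_rows s : s = e3 i0 *t prow i0 s + e3 i1 *t prow i1 s + e3 i2 *t prow i2 s.
Proof.
apply: rV9P => i j; rewrite !addmx_entry !tens33E !mxE.
by case: (ord3P i) => -> /=; ring.
Qed.

Lemma alt2_triple_product x y s : alt2 s ->
  det3 x y (e3 i0) *: prow i0 s + det3 x y (e3 i1) *: prow i1 s
  + det3 x y (e3 i2) *: prow i2 s = vol y s *: x - vol x s *: y.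
Proof.
move=> [sw diag]; apply/rowP => j.
rewrite !(submx_entry, addmx_entry, scalemx_entry) !mxE /det3 /vol !mxE /=.
case: (ord3P j) => -> /=; rewrite ?(sw i0 i1) ?(sw i0 i2) ?(sw i1 i2) ?diag; ring.
Qed.

Lemma psi_tens_mul x y s c (A : 'M[k]_9) : alt2 s ->
  psi x y ((s *t c : 'rV_27) *m Imx A) =
  vol y s * vol x ((x *t c) *m A) - vol x s * vol x ((y *t c) *m A).
Proof.
move=> alt_s; pose L (v : 'rV[k]_3) := vol x ((v *t c : 'rV_9) *m A).
have LD v v' : L (v + v') = L v + L v' by rewrite /L tensmxDl mulmxDl volD.
have LB v v' : L (v - v') = L v - L v' by rewrite /L tensmxBl mulmxBl volB.
have LZ r v : L (r *: v) = r * L v by rewrite /L tensmxZl -scalemxAl volZ.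
rewrite {1}[s]rV9_rows !tensmxDl !mulmxDl !tens3_assoc !tensmx_mul39 !mulmx1.
rewrite !psiD !psi_tens.
transitivity (L (det3 x y (e3 i0) *: prow i0 s + det3 x y (e3 i1) *: prow i1 s
                 + det3 x y (e3 i2) *: prow i2 s)); first by rewrite !LD !LZ.
by rewrite alt2_triple_product // LB !LZ.
Qed.

Lemma psi_braid_wedge x y a b (q : k) (A B : 'M[k]_9) :
  (forall s, alt2 (s *m B)) ->
  psi x y ((y *t skew2 b a : 'rV_27) *m mxI B *m Imx A - q *: (y *t skew2 b a))
  = wedge1 (fun z => vol x ((x *t z) *m A)) (fun z => vol y ((y *t z) *m B)) a b
    - wedge1 (fun z => vol x ((y *t z) *m A)) (fun z => vol x ((y *t z) *m B)) a b.
Proof.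
move=> altB; rewrite psiB psiZ psi_tens det3_xyy mul0r mulr0 subr0.
rewrite tensmxBr -!tens3_assoc !mulmxBl /mxI !tensmx_mul93 !mulmx1 psiB.
by rewrite !psi_tens_mul // /wedge1; ring.
Qed.

Section Twisting.
Variable Z : 'M[k]_3.
Hypothesis Zu : Z \in unitmx.
Implicit Types (Y : 'M[k]_9).
Local Notation Zi := (invmx Z).
Local Notation om0 om := (om (e k 0) (e k 1) (e k 2)).
Local Notation U3 := (bw3 Z (e k 0) (e k 1) (e k 2)).

Definition ZI : 'M[k]_9 := Z *t (1%:M : 'M_3).
Definition invZI : 'M[k]_9 := Zi *t (1%:M : 'M_3).
Definition Z2Z : 'M[k]_9 := Z *m Z *t Z.
Definition invZ2Z : 'M[k]_9 := Zi *m Zi *t Zi.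
Definition Z2ZI : 'M[k]_27 := Z2Z *t (1%:M : 'M_3).
Definition invZ2ZI : 'M[k]_27 := invZ2Z *t (1%:M : 'M_3).

Lemma ZIK : ZI *m invZI = 1%:M.
Proof. by rewrite tensmx_mulmx33 (mulmxV Zu) mulmx1 tensmx11. Qed.

Lemma Z2ZIK : Z2ZI *m invZ2ZI = 1%:M.
Proof.
by rewrite tensmx_mulmx93 tensmx_mulmx33 mulmxA (mulmxK Zu) !(mulmxV Zu) mulmx1 !tensmx11.
Qed.

Lemma invZ2ZIK : invZ2ZI *m Z2ZI = 1%:M.
Proof.
by rewrite tensmx_mulmx93 tensmx_mulmx33 mulmxA (mulmxKV Zu) !(mulVmx Zu) mulmx1 !tensmx11.
Qed.

Lemma invZ2ZI_assoc : invZ2ZI = (Zi *m Zi) *t invZI.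
Proof. exact: tensmx3_assoc. Qed.

Lemma bw2_ZI a b : bw2 Z a b = skew2 a b *m ZI.
Proof. by rewrite /bw2 /t2 /skew2 mulmxBl !tensmx_mul33 !mulmx1. Qed.

Lemma bw2_invZI a b : bw2 Z a b *m invZI = skew2 a b.
Proof. by rewrite bw2_ZI -mulmxA ZIK mulmx1. Qed.

Lemma bw2_invZ2Z a b : bw2 Z a b *m invZ2Z = skew2 (a *m Zi) (b *m Zi).
Proof. by rewrite /bw2 /t2 /skew2 mulmxBl !tensmx_mul33 !mulmxA !(mulmxK Zu). Qed.

Lemma bw3_Z2ZI a b c : bw3 Z a b c = alt3 a b c *m Z2ZI.
Proof.
by rewrite /bw3 /alt3 /t3 !mulmxBl !mulmxDl !tensmx_mul93 !tensmx_mul33 !mulmx1 !mulmxA.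
Qed.

Lemma I2_invZI_alt2 s : inI2 Z s -> alt2 (s *m invZI).
Proof.
move=> I2s; apply: (inspan_alt_in I2s) => _ [a [b ->]].
by rewrite bw2_invZI; apply: alt2_skew2.
Qed.

Lemma I2_invZ2Z_alt2 s : inI2 Z s -> alt2 (s *m invZ2Z).
Proof.
move=> I2s; apply: (inspan_alt_in I2s) => _ [a [b ->]].
by rewrite bw2_invZ2Z; apply: alt2_skew2.
Qed.

Lemma Ups3_invZ2ZI_alt u : inUps3 Z u -> alt12 (u *m invZ2ZI) /\ alt23 (u *m invZ2ZI).
Proof.
case=> I2V_u VI2_u; split=> [l|i].
- apply: (inspan_alt_in I2V_u) => _ [a [z [I2a ->]]].
  have [sw dg] := I2_invZ2Z_alt2 I2a.
  rewrite /tIV tensmx_mul93 mulmx1; split=> [i j|i]; rewrite !tens93E.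
    by rewrite sw mulNr.
  by rewrite dg mul0r.
- rewrite invZ2ZI_assoc; apply: (inspan_alt_in VI2_u) => _ [x [a [I2a ->]]].
  have [sw dg] := I2_invZI_alt2 I2a.
  rewrite /tVI tensmx_mul39; split=> [j l|j]; rewrite !tens39E.
    by rewrite sw mulrN.
  by rewrite dg mulr0.
Qed.

Lemma bw3_det a b c : bw3 Z a b c = det3 a b c *: U3.
Proof. by rewrite !bw3_Z2ZI !eE alt3_det scalemxAl. Qed.

Lemma U3_neq0 : U3 != 0.
Proof.
apply/eqP => /(congr1 (mulmx^~ invZ2ZI)).
rewrite bw3_Z2ZI -mulmxA Z2ZIK mulmx1 mul0mx !eE.
by move/eqP; rewrite (negbTE alt3_neq0).
Qed.

Lemma omt_scale_U3 om r : omt Z om (r *: U3) = r * om0 om.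
Proof. by rewrite /omt -scalemxAl mulmx_pinv_rV ?U3_neq0 // scalemx_entry !mxE mulr1. Qed.

Lemma B2_row : (row i0 (B2 Z) = bw2 Z (e3 i0) (e3 i1))
  * (row i1 (B2 Z) = bw2 Z (e3 i0) (e3 i2)) * (row i2 (B2 Z) = bw2 Z (e3 i1) (e3 i2)).
Proof.
rewrite /B2 !eE; do !split.
- rewrite {1}(_ : i0 = lshift (1 + 1) (0 : 'I_1)); last by apply: val_inj.
  exact: etrans (rowKu _ _ _) (row_id _ _).
- rewrite {1}(_ : i1 = rshift 1 (lshift 1 (0 : 'I_1))); last by apply: val_inj.
  exact: etrans (rowKd _ _ _) (etrans (rowKu _ _ _) (row_id _ _)).
- rewrite {1}(_ : i2 = rshift 1 (rshift 1 (0 : 'I_1))); last by apply: val_inj.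
  exact: etrans (rowKd _ _ _) (etrans (rowKd _ _ _) (row_id _ _)).
Qed.

Lemma mulB2 c : c *m B2 Z =
  c 0 i0 *: bw2 Z (e3 i0) (e3 i1) + c 0 i1 *: bw2 Z (e3 i0) (e3 i2)
  + c 0 i2 *: bw2 Z (e3 i1) (e3 i2).
Proof. by rewrite mulmx_sum_row sum3 !B2_row. Qed.

Lemma bw2_basis a b : bw2 Z a b =
  (a 0 i0 * b 0 i1 - a 0 i1 * b 0 i0) *: bw2 Z (e3 i0) (e3 i1)
  + (a 0 i0 * b 0 i2 - a 0 i2 * b 0 i0) *: bw2 Z (e3 i0) (e3 i2)
  + (a 0 i1 * b 0 i2 - a 0 i2 * b 0 i1) *: bw2 Z (e3 i1) (e3 i2).
Proof. by rewrite [LHS]bw2_ZI skew2_basis !mulmxDl -!scalemxAl -!bw2_ZI. Qed.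

Lemma bw2_sub_B2 a b : (bw2 Z a b <= B2 Z)%MS.
Proof.
have -> : bw2 Z a b = ((a 0 i0 * b 0 i1 - a 0 i1 * b 0 i0) *: e3 i0
    + (a 0 i0 * b 0 i2 - a 0 i2 * b 0 i0) *: e3 i1
    + (a 0 i1 * b 0 i2 - a 0 i2 * b 0 i1) *: e3 i2) *m B2 Z.
  rewrite mulB2 !(addmx_entry, scalemx_entry) !e3E /=.
  by rewrite !mulr1 !mulr0 !addr0 !add0r bw2_basis.
exact: submxMl.
Qed.

Lemma I2_sub_B2 s : inI2 Z s -> (s <= B2 Z)%MS.
Proof.
move=> /(_ <<B2 Z>>%MS); rewrite genmxE; apply=> _ [a [b ->]].
by rewrite genmxE bw2_sub_B2.
Qed.

Lemma bw2_mul_invZZ a b : bw2 Z a b *m (Zi *t Zi) = bw2 Z (a *m Zi) (b *m Zi).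
Proof.
(* the two sides agree up to [3 * 3 = 9] in their types *)
rewrite /bw2 /t2 mulmxBl !tensmx_mul33 !(mulmxK Zu) !(mulmxKV Zu).
reflexivity.
Qed.

Lemma B2_mul_invZZ s : (s <= B2 Z)%MS -> (s *m (Zi *t Zi) <= B2 Z)%MS.
Proof.
move=> s_B2; apply: submx_trans (submxMr _ s_B2) _; apply/row_subP => i.
by rewrite row_mul; case: (ord3P i) => ->; rewrite B2_row bw2_mul_invZZ bw2_sub_B2.
Qed.

Lemma omt_bwVI om x m : (m <= B2 Z)%MS ->
  omt Z om (bwVI Z x m) = vol x (m *m invZI) * om0 om.
Proof.
move=> m_B2; rewrite /bwVI !inord3 !(bw3_det x) !scalerA -!scalerDl omt_scale_U3.
rewrite -[in RHS](mulmxKpV m_B2) -/(wcoord Z m) mulB2 !mulmxDl -!scalemxAl.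
by rewrite !bw2_invZI !volD !volZ !vol_skew2 !eE.
Qed.

Definition conjZI Y : 'M[k]_9 := ZI *m Y *m invZI.
Definition conjZ2Z Y : 'M[k]_9 := Z2Z *m Y *m invZ2Z.

Lemma ell_vol om Y x y z : (forall s, inI2 Z (s *m Y)) ->
  ell Z om Y x y z = vol x ((y *t z) *m conjZI Y) * om0 om.
Proof.
move=> imY; rewrite /ell omt_bwVI ?I2_sub_B2 //.
by rewrite /conjZI !mulmxA /t2 tensmx_mul33 mulmx1.
Qed.

Lemma ell_vol_conj om Y x y z : (forall s, inI2 Z (s *m Y)) ->
  ell Z om ((Z *t Z) *m Y *m (Zi *t Zi)) x y z = vol x ((y *t z) *m conjZ2Z Y) * om0 om.
Proof.
move=> imY; rewrite /ell omt_bwVI; last by rewrite mulmxA B2_mul_invZZ ?I2_sub_B2 // mulmxA.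
by rewrite /conjZ2Z !mulmxA /t2 !tensmx_mul33 -!mulmxA /invZI tensmx_mulmx33 mulmx1.
Qed.

Lemma alt2_conjZ2Z Y : (forall s, inI2 Z (s *m Y)) -> forall s, alt2 (s *m conjZ2Z Y).
Proof. by move=> imY s; rewrite /conjZ2Z !mulmxA; apply: I2_invZ2Z_alt2. Qed.

Lemma scalar_sub_conjZZ (q : k) Y :
  q%:M - (Z *t Z) *m Y *m (Zi *t Zi) = (Z *t Z) *m (q%:M - Y) *m (Zi *t Zi).
Proof.
rewrite mulmxBr mulmxBl mul_mx_scalar -scalemxAl tensmx_mulmx33.
by rewrite (mulmxV Zu) tensmx11 scalemx1.
Qed.

Lemma braid_invZ2ZI Y (q : k) u :
  (u *m mxI Y *m Imx Y - q *: u) *m invZ2ZI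
  = u *m invZ2ZI *m mxI (conjZ2Z Y) *m Imx (conjZI Y) - q *: (u *m invZ2ZI).
Proof.
have E1 : Z2ZI *m mxI Y *m invZ2ZI = mxI (conjZ2Z Y).
  by rewrite /mxI !tensmx_mulmx93 !mulmx1.
have E2 : Z2ZI *m Imx Y *m invZ2ZI = Imx (conjZI Y).
  rewrite invZ2ZI_assoc /Z2ZI tensmx3_assoc /Imx !tensmx_mulmx39 mulmx1 mulmxA.
  by rewrite (mulmxK Zu) (mulmxV Zu).
rewrite mulmxBl -scalemxAl -E1 -E2 !mulmxA -[u *m invZ2ZI *m Z2ZI]mulmxA invZ2ZIK.
by rewrite mulmx1 -[u *m mxI Y *m invZ2ZI *m Z2ZI]mulmxA invZ2ZIK mulmx1.
Qed.

Lemma tVI_bw2_in_VI2 x a b :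
  inspan (fun u => exists x s, inI2 Z s /\ u = tVI x s) (tVI x (bw2 Z a b)).
Proof.
by apply: inspan_gen; exists x, (bw2 Z a b); split=> //; apply: inspan_gen; exists a, b.
Qed.

Lemma tVI_invZ2ZI y a b : tVI (y *m Z *m Z) (bw2 Z a b) *m invZ2ZI = y *t skew2 a b.
Proof. by rewrite invZ2ZI_assoc /tVI tensmx_mul39 bw2_invZI mulmxA !(mulmxK Zu). Qed.

End Twisting.

End ThreeSpace.

Theorem lemma2p1 (k : fieldType) (Z : 'M[k]_3) (R : 'M[k]_9) (q : k)
  (om : 'rV[k]_3 -> 'rV[k]_3 -> 'rV[k]_3 -> k) :
  Z \in unitmx ->
  q != 0 ->
  (* braid equation for R *)
  mxI R *m Imx R *m mxI R = Imx R *m mxI R *m Imx R ->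
  (* Hecke relation (R - q)(R + 1) = 0 *)
  (R - q%:M) *m (R + 1%:M) = 0 ->
  (* Im(R - q Id) = I_2 *)
  (forall w : 'rV[k]_9, (w <= R - q%:M)%MS <-> inI2 Z w) ->
  (* omega : nonzero alternating trilinear form *)
  trilinear om -> alternating om -> (exists x y z, om x y z != 0) ->
  (* hypothesis: (Id (x) Y)(Y (x) Id) w - q w in Upsilon^(3) for w in V (x) I_2 *)
  (forall w : 'rV[k]_27,
     inspan (fun u => exists x a, inI2 Z a /\ u = tVI x a) w ->
     inUps3 Z (w *m mxI (q%:M - R) *m Imx (q%:M - R) - q *: w)) ->
  forall x y : 'rV[k]_3,
    let Y := q%:M - R in
    let Y' := q%:M - (Z *t Z) *m R *m (invmx Z *t invmx Z) in
    forall u v : 'rV[k]_3,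
      wedge1 (ell Z om Y x y) (ell Z om Y' x y) u v =
      wedge1 (ell Z om Y x x) (ell Z om Y' y y) u v.
Proof.
(* Only the invertibility of zeta, Im(Y) <= I_2 and the hypothesis on Upsilon^(3)
   are needed. *)
move=> Zu _ _ _ imR _ _ _ hyp x y Y Y' u v.
have imY s : inI2 Z (s *m Y).
  by apply/imR; rewrite /Y -opprB mulmxN -mulNmx submxMl.
rewrite /Y' scalar_sub_conjZZ //.
have [alt12_w alt23_w] := Ups3_invZ2ZI_alt Zu (hyp _ (tVI_bw2_in_VI2 (y *m Z *m Z) v u)).
have := psi_alt x y alt12_w alt23_w.
rewrite braid_invZ2ZI // tVI_invZ2ZI // psi_braid_wedge; last exact: alt2_conjZ2Z.
move=> E; apply/eqP; rewrite -subr_eq0 -(mulr0 (- om (e k 0) (e k 1) (e k 2) ^+ 2)) -E.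
by rewrite /wedge1 !ell_vol_conj // !ell_vol //; apply/eqP; ring.
Qed.
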